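(* Let $\lambda$ be a partition, $\mu\in\mathcal{D}(\lambda)$ and $\nu\in\mathcal{U}(\lambda)$. Then \[ \lim_{q\to1}\gamma_{\nu/\lambda/\mu}(q,q)=(h_\lambda(c_{\mu,\nu}))^2, \] and consequently \[ \lim_{q\to1}\mathcal{P}_\lambda(\mu\rightarrow\nu)|_{t=q}=\lim_{q\to1}\overline{\mathcal{P}}_\lambda(\mu\leftarrow\nu)|_{t=q}=\frac{(H_\lambda)^2}{H_\mu H_\nu}\cdot\frac{1}{(h_\lambda(c_{\mu,\nu}))^2}. \]
   Context: Partitions are Young diagrams in French convention (cells $(x,y)\in\mathbb{Z}_{>0}^2$, $x\le\lambda_y$), $\lambda'$ the conjugate; for $c=(x,y)\in\lambda$, $a_\lambda(c)=\lambda_y-x$, $\ell_\lambda(c)=\lambda'_x-y$, $h_\lambda(c)=a_\lambda(c)+\ell_\lambda(c)+1$, $H_\kappa=\prod_{c\in\kappa}h_\kappa(c)$. $n(\kappa)=\sum_{c\in\kappa}\ell_\kappa(c)$, $n'(\kappa)=\sum_{c\in\kappa}a_\kappa(c)$, $n(\rho/\kappa)=n(\rho)-n(\kappa)$, $n'(\rho/\kappa)=n'(\rho)-n'(\kappa)$. $\mathcal{U}(\lambda)$ (resp. $\mathcal{D}(\lambda)$): partitions obtained by adding (resp. removing) one cell. For $\kappa\subseteq\rho$, $\mathcal{R}_{\rho/\kappa}$ (resp. $\mathcal{C}_{\rho/\kappa}$): cells of $\kappa$ in a row (resp. column) containing a cell of $\rho/\kappa$. $[i,j]=1-q^it^j$.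 For $\kappa\lessdot\rho$ (one-cell difference): $\alpha_{\rho/\kappa}=\prod_{c\in\mathcal{R}_{\rho/\kappa}}\frac{[a_\kappa(c),\ell_\kappa(c)+1]}{[a_\rho(c),\ell_\rho(c)+1]}\prod_{c\in\mathcal{C}_{\rho/\kappa}}\frac{[a_\kappa(c)+1,\ell_\kappa(c)]}{[a_\rho(c)+1,\ell_\rho(c)]}$, $\overline{\alpha}_{\rho/\kappa}=\prod_{c\in\mathcal{R}_{\rho/\kappa}}\frac{[a_\kappa(c)+1,\ell_\kappa(c)]}{[a_\rho(c)+1,\ell_\rho(c)]}\prod_{c\in\mathcal{C}_{\rho/\kappa}}\frac{[a_\kappa(c),\ell_\kappa(c)+1]}{[a_\rho(c),\ell_\rho(c)+1]}$, $\beta=1/\alpha$, $\overline{\beta}=1/\overline{\alpha}$. With $A=n'(\lambda/\mu)-n'(\nu/\lambda)$, $B=n(\nu/\lambda)-n(\lambda/\mu)$: $\gamma_{\nu/\lambda/\mu}(q,t)=\frac{(1-q^At^B)(1-q^{A+1}t^{B-1})}{(1-q)(1-t)}$, $\mathcal{P}_\lambda(\mu\rightarrow\nu)=t^{B-1}\alpha_{\nu/\lambda}\beta_{\lambda/\mu}/\gamma_{\nu/\lambda/\mu}$, $\overline{\mathcal{P}}_\lambda(\mu\leftarrow\nu)=t^{B-1}\overline{\alpha}_{\nu/\lambda}\overline{\beta}_{\lambda/\mu}/\gamma_{\nu/\lambda/\mu}$. The cell $c_{\mu,\nu}$: let $c_1$ be the cell in the row of $\nu/\lambda$ and the column of $\lambda/\mu$,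 and $c_2$ the cell in the column of $\nu/\lambda$ and the row of $\lambda/\mu$; exactly one of them lies in $\lambda$, and that one is $c_{\mu,\nu}$. *)

From HB Require Import structures.
From mathcomp Require Import all_boot all_order all_algebra.
From mathcomp Require Import all_classical all_reals all_analysis.
Set Implicit Arguments. Unset Strict Implicit. Unset Printing Implicit Defensive.
Import Order.TTheory GRing.Theory Num.Theory.

(* French convention: a cell is
   (x, y) with x the column and y the row, both >= 1, and x <= lambda_y. *)
Definition is_partition (l : seq nat) : bool :=
  sorted geq l && all (fun r => 0 < r) l.

(* lambda_y (row y, 1-indexed; 0 outside) *)
Definition prow (l : seq nat) (y : nat) : nat := nth 0 l y.-1.
Definition pcol (l : seq nat) (x : nat) : nat := count (fun r => x <= r) l.

Definition cells (l : seq nat) : seq (nat * nat) :=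
  flatten [seq [seq (x.+1, y.+1) | x <- iota 0 (nth 0 l y)] | y <- iota 0 (size l)].

Definition arm (l : seq nat) (c : nat * nat) : nat := prow l c.2 - c.1.
Definition leg (l : seq nat) (c : nat * nat) : nat := pcol l c.1 - c.2.
Definition hook (l : seq nat) (c : nat * nat) : nat := arm l c + leg l c + 1.
Definition Hprod (l : seq nat) : nat := \prod_(c <- cells l) hook l c.
Definition nfun (l : seq nat) : nat := \sum_(c <- cells l) leg l c.
Definition nfun' (l : seq nat) : nat := \sum_(c <- cells l) arm l c.

Definition lessdot (k r : seq nat) : Prop :=
  [/\ is_partition k, is_partition r,
      forall i, nth 0 k i <= nth 0 r i & sumn r = (sumn k).+1].

Definition inD (lam mu : seq nat) : Prop := lessdot mu lam.
Definition inU (lam nu : seq nat) : Prop := lessdot lam nu.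

Definition skew (r k : seq nat) : seq (nat * nat) :=
  [seq c <- cells r | c \notin cells k].
(* the (unique, when kappa <. rho) cell of rho/kappa *)
Definition skew_cell (r k : seq nat) : nat * nat := head (0, 0) (skew r k).

Definition Rcells (r k : seq nat) : seq (nat * nat) :=
  [seq c <- cells k | has (fun d => d.2 == c.2) (skew r k)].
Definition Ccells (r k : seq nat) : seq (nat * nat) :=
  [seq c <- cells k | has (fun d => d.1 == c.1) (skew r k)].

Definition c_mu_nu (lam mu nu : seq nat) : nat * nat :=
  let cl := skew_cell lam mu in
  let cn := skew_cell nu lam in
  let c1 := (cl.1, cn.2) in
  let c2 := (cn.1, cl.2) in
  if c1 \in cells lam then c1 else c2.

Local Open Scope ring_scope.

Section QT.
Variable R : realType.

Definition br (q t : R) (i j : nat) : R := 1 - q ^+ i * t ^+ j.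

Definition alpha (r k : seq nat) (q t : R) : R :=
  (\prod_(c <- Rcells r k)
     (br q t (arm k c) (leg k c).+1 / br q t (arm r c) (leg r c).+1)) *
  (\prod_(c <- Ccells r k)
     (br q t (arm k c).+1 (leg k c) / br q t (arm r c).+1 (leg r c))).

Definition alphabar (r k : seq nat) (q t : R) : R :=
  (\prod_(c <- Rcells r k)
     (br q t (arm k c).+1 (leg k c) / br q t (arm r c).+1 (leg r c))) *
  (\prod_(c <- Ccells r k)
     (br q t (arm k c) (leg k c).+1 / br q t (arm r c) (leg r c).+1)).

Definition beta (r k : seq nat) (q t : R) : R := (alpha r k q t)^-1.
Definition betabar (r k : seq nat) (q t : R) : R := (alphabar r k q t)^-1.

Definition Aexp (nu lam mu : seq nat) : int :=
  ((nfun' lam)%:Z - (nfun' mu)%:Z) - ((nfun' nu)%:Z - (nfun' lam)%:Z).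
Definition Bexp (nu lam mu : seq nat) : int :=
  ((nfun nu)%:Z - (nfun lam)%:Z) - ((nfun lam)%:Z - (nfun mu)%:Z).

Definition gamma (nu lam mu : seq nat) (q t : R) : R :=
  let A := Aexp nu lam mu in let B := Bexp nu lam mu in
  (1 - q ^ A * t ^ B) * (1 - q ^ (A + 1) * t ^ (B - 1)) / ((1 - q) * (1 - t)).

Definition Pforw (lam mu nu : seq nat) (q t : R) : R :=
  t ^ (Bexp nu lam mu - 1) * alpha nu lam q t * beta lam mu q t
    / gamma nu lam mu q t.
Definition Pback (lam mu nu : seq nat) (q t : R) : R :=
  t ^ (Bexp nu lam mu - 1) * alphabar nu lam q t * betabar lam mu q t
    / gamma nu lam mu q t.

End QT.

From Pilot Require Import Defs.
From HB Require Import structures.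
From mathcomp Require Import all_boot all_order all_algebra.
From mathcomp Require Import all_classical all_reals all_analysis.
From mathcomp Require Import ring zify.
Import Order.TTheory GRing.Theory Num.Theory numFieldNormedType.Exports.

(* At t = q both numerator factors of gamma become 1 - q^(A+B), so
   gamma(q,q) is the square of the q-integer [A+B]_q = (1 - q^(A+B))/(1 - q),
   which tends to (A+B)^2.  If lambda/mu and nu/lambda lie in rows i1 and i2,
   then A + B = (mu_i1 + i2) - (lambda_i2 + i1), and in each of the two
   possible positions of c_{mu,nu} its hook in lambda is |A + B|.
   Each factor [a,b]/[c,d] of alpha or alphabar tends to (a+b)/(c+d), a ratio
   of hook lengths.  Adding the cell rho/kappa changes the hooks of exactly the
   cells of R and C, and the new cell has hook 1 in rho, so both alpha and
   alphabar tend to H_kappa/H_rho; the limits of P and Pbar follow. *)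

Lemma mem_cells (l : seq nat) (x y : nat) :
  ((x, y) \in cells l) = [&& 0 < x, 0 < y & x <= nth 0 l y.-1].
Proof.
apply/allpairsPdep/and3P => [[y' [x' [_ x'_l [-> ->]]]] | [x_gt0 y_gt0 x_le]].
  by move: x'_l; rewrite mem_iota.
exists y.-1, x.-1; rewrite !mem_iota !prednK //; split => //.
rewrite add0n -[y]prednK // ltnNge; apply: contraL x_le => /(nth_default 0) ->.
by rewrite -ltnNge.
Qed.

Lemma uniq_cells (l : seq nat) : uniq (cells l).
Proof.
apply: allpairs_uniq_dep => [|y _|[y1 x1] [y2 x2] _ _ /= [-> ->]] //; exact: iota_uniq.
Qed.

Lemma leq_pcol (l : seq nat) (x y : nat) : sorted geq l -> 0 < x -> 0 < y ->
  (y <= pcol l x) = (x <= nth 0 l y.-1).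
Proof.
elim: l y => [|a l IHl] y /= sorted_al x_gt0 y_gt0; first by rewrite nth_nil; lia.
have sorted_l := path_sorted sorted_al.
have [x_le_a|a_lt_x] := leqP x a.
  by case: y y_gt0 => [|[|y]] //= _; rewrite add1n ltnS IHl.
have l_le_a : all (geq a) l.
  by move: sorted_al; rewrite (path_sortedE (rev_trans leq_trans)) => /andP[].
have small_l b : b \in l -> b < x.
  by move=> /(allP l_le_a) /= b_le_a; exact: leq_ltn_trans a_lt_x.
rewrite add0n; have -> : pcol l x = 0.
  by apply/eqP; rewrite -leqn0 leqNgt -has_count; apply/hasPn => b /small_l; rewrite -ltnNge.
rewrite leqn0 gtn_eqF //; apply/esym/negbTE; rewrite -ltnNge.
case: y.-1 => [//|j] /=.
have [j_lt_l|l_le_j] := ltnP j (size l); first exact/small_l/mem_nth.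
by rewrite nth_default.
Qed.

Lemma sumn_nth (s : seq nat) (n : nat) : size s <= n ->
  sumn s = \sum_(0 <= j < n) nth 0 s j.
Proof.
move=> s_le_n; rewrite sumnE (big_nth 0) (big_nat_widen _ _ _ _ _ s_le_n).
rewrite [RHS](bigID (fun j => j < size s)) /= [X in _ = _ + X]big1 ?addn0 //.
by move=> j; rewrite -leqNgt => /(nth_default 0).
Qed.

Lemma lessdot_add_row {k r : seq nat} : lessdot k r ->
  [/\ sorted geq k, sorted geq r & exists i, forall j, nth 0 r j = nth 0 k j + (j == i)].
Proof.
case=> /andP[sorted_k _] /andP[sorted_r _] le_kr sum_kr; split => //.
set n := size r + size k.
have : \sum_(j <- index_iota 0 n) (nth 0 r j - nth 0 k j) = 1.
  by rewrite sumnB // -!sumn_nth ?leq_addr ?leq_addl // sum_kr subSnn.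
case/sum_nat_seq_eq1 => i [_ _ diff_i diff_j]; exists i => j.
case: eqVneq => [->|ne_ji]; first by have := le_kr i; lia.
have [j_lt_n|n_le_j] := ltnP j n.
  by have := le_kr j; have := diff_j j ne_ji; rewrite mem_index_iota j_lt_n; lia.
by rewrite !nth_default //; apply: leq_trans n_le_j; rewrite ?leq_addr ?leq_addl.
Qed.

Lemma count_cells_row (l : seq nat) (i : nat) :
  count (fun c => c.2 == i.+1) (cells l) = nth 0 l i.
Proof.
rewrite -size_filter -[RHS](size_iota 0) -(size_map (fun x => (x.+1, i.+1))).
apply/perm_size/uniq_perm; rewrite ?filter_uniq ?uniq_cells //.
  by rewrite map_inj_uniq ?iota_uniq // => ? ? [].
move=> [a b]; rewrite mem_filter mem_cells /=; apply/idP/mapP.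
  case/and4P=> /eqP-> a_gt0 _ a_le; exists a.-1; last by rewrite prednK.
  by rewrite mem_iota prednK.
by case=> x; rewrite mem_iota => x_lt [-> ->] /=; rewrite eqxx.
Qed.

Lemma count_cells_col (l : seq nat) (x : nat) : sorted geq l -> 0 < x ->
  count (fun c => c.1 == x) (cells l) = pcol l x.
Proof.
move=> sorted_l x_gt0.
rewrite -size_filter -[RHS](size_iota 0) -(size_map (fun y => (x, y.+1))).
apply/perm_size/uniq_perm; rewrite ?filter_uniq ?uniq_cells //.
  by rewrite map_inj_uniq ?iota_uniq // => ? ? [].
move=> [a b]; rewrite mem_filter mem_cells /=; apply/idP/mapP.
  case/and4P=> /eqP-> _ b_gt0 x_le; exists b.-1; last by rewrite prednK.
  by rewrite mem_iota prednK // leq_pcol.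
case=> y; rewrite mem_iota add0n => y_lt [-> ->] /=.
by rewrite eqxx x_gt0 -(leq_pcol l x y.+1).
Qed.

Lemma hook_arm_legS (l : seq nat) (c : nat * nat) :
  hook l c = arm l c + (leg l c).+1.
Proof. by rewrite /hook addn1 addnS. Qed.

Lemma hook_armS_leg (l : seq nat) (c : nat * nat) :
  hook l c = (arm l c).+1 + leg l c.
Proof. by rewrite /hook addn1 addSn. Qed.

Lemma sum_nat_bool (T : Type) (s : seq T) (P : pred T) :
  \sum_(c <- s) (P c : nat) = count P s.
Proof. by rewrite -sum1_count [RHS]big_mkcond. Qed.

Section AddCell.
Context {k r : seq nat} {i : nat}.
Hypotheses (sorted_k : sorted geq k) (sorted_r : sorted geq r).
Hypothesis r_row : forall j, nth 0 r j = nth 0 k j + (j == i).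

Local Notation x_new := (nth 0 k i).+1.
Local Notation cell_new := (x_new, i.+1).

Lemma cell_new_notin : cell_new \notin cells k.
Proof. by rewrite mem_cells ltnn !andbF. Qed.

Lemma perm_cells_add : perm_eq (cells r) (cell_new :: cells k).
Proof.
apply: uniq_perm; rewrite /= ?cell_new_notin ?uniq_cells // => -[a b].
rewrite inE !mem_cells xpair_eqE; case: b => [|b] /=; first by rewrite !andbF.
rewrite r_row eqSS.
by case: eqVneq => [->|_]; rewrite ?addn0 ?andbF //= andbT; lia.
Qed.

(* Unqualified, [skew] is the notation of sesquilinear forms. *)
Lemma skew_add : Defs.skew r k = [:: cell_new].
Proof.
have filter_k : [seq c <- cells k | c \notin cells k] = [::].
  by rewrite (@eq_in_filter _ _ pred0) ?filter_pred0 // => c ->.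
rewrite /Defs.skew (perm_small_eq _ (perm_filter _ perm_cells_add)) /=.
  by rewrite cell_new_notin filter_k.
by rewrite cell_new_notin filter_k.
Qed.

Lemma pcol_add (z : nat) : 0 < z -> pcol r z = pcol k z + (z == x_new).
Proof.
move=> z_gt0; rewrite -!count_cells_col // (permP perm_cells_add) /=.
by rewrite addnC eq_sym.
Qed.

Lemma pcol_new : pcol k x_new = i.
Proof.
have i_lt_r : i < size r.
  by rewrite ltnNge; apply/negP => /(nth_default 0); rewrite r_row eqxx addn1.
apply/eqP; rewrite eqn_leq leqNgt (leq_pcol _ _ _ sorted_k) //= ltnn.
have [->//|i_gt0] := posnP i; rewrite leq_pcol //.
have := sorted_leq_nth (rev_trans leq_trans) leqnn 0 sorted_r.
by move=> /(_ i.-1 i); rewrite !inE !r_row eqxx i_lt_r; lia.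
Qed.

Lemma arm_add (c : nat * nat) : c \in cells k -> arm r c = arm k c + (c.2 == i.+1).
Proof.
case: c => [a [|b]]; rewrite mem_cells ?andbF //= /arm /prow /= r_row eqSS; lia.
Qed.

Lemma leg_add (c : nat * nat) : c \in cells k -> leg r c = leg k c + (c.1 == x_new).
Proof.
case: c => [a b]; rewrite mem_cells /leg /= => /and3P[a_gt0 b_gt0 a_le].
by rewrite pcol_add //; have := leq_pcol k a b sorted_k a_gt0 b_gt0; rewrite a_le; lia.
Qed.

Lemma hook_new : hook r cell_new = 1.
Proof. by rewrite /hook /arm /leg /prow /= r_row pcol_add // pcol_new !eqxx; lia. Qed.

Lemma Rcells_add : Rcells r k = [seq c <- cells k | c.2 == i.+1].
Proof. by rewrite /Rcells skew_add; apply: eq_filter => c /=; rewrite orbF eq_sym. Qed.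

Lemma Ccells_add : Ccells r k = [seq c <- cells k | c.1 == x_new].
Proof. by rewrite /Ccells skew_add; apply: eq_filter => c /=; rewrite orbF eq_sym. Qed.

Lemma nfun'_add : nfun' r = nfun' k + nth 0 k i.
Proof.
rewrite /nfun' (perm_big _ perm_cells_add) big_cons /= {1}/arm /prow /= r_row eqxx.
rewrite addn1 subnn add0n (eq_big_seq _ arm_add) big_split /=.
by rewrite sum_nat_bool count_cells_row.
Qed.

Lemma nfun_add : nfun r = nfun k + i.
Proof.
rewrite /nfun (perm_big _ perm_cells_add) big_cons /= {1}/leg /= pcol_add //.
rewrite pcol_new eqxx addn1 subnn add0n (eq_big_seq _ leg_add) big_split /=.
by rewrite sum_nat_bool count_cells_col // pcol_new.
Qed.

Local Open Scope ring_scope.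

Lemma prod_hook_ratio_add (F : numFieldType) :
  \prod_(c <- Rcells r k) ((hook k c)%:R / (hook r c)%:R) *
  \prod_(c <- Ccells r k) ((hook k c)%:R / (hook r c)%:R)
  = (Hprod k)%:R / (Hprod r)%:R :> F.
Proof.
have -> : Hprod r = \prod_(c <- cells k) hook r c.
  by rewrite /Hprod (perm_big _ perm_cells_add) big_cons hook_new [LHS]mul1n.
rewrite /Hprod !natr_prod -prodf_div Rcells_add Ccells_add !big_filter.
rewrite [RHS](bigID (fun c => c.2 == i.+1)) /=; congr (_ * _).
rewrite [RHS](bigID (fun c => c.1 == x_new)) /= [X in _ = _ * X]big1_seq ?mulr1.
  rewrite big_seq_cond [RHS]big_seq_cond; apply: eq_bigl => -[a b] /=.
  case: (a =P x_new) => [->|]; rewrite ?andbF ?andbT //.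
  by case: (b =P i.+1) => [->|_] /=; rewrite ?andbF ?andbT //; exact: negbTE cell_new_notin.
move=> c /andP[/andP[c_row c_col] c_k].
rewrite /hook arm_add // leg_add // (negbTE c_row) (negbTE c_col) !addn0.
by rewrite divff // pnatr_eq0 addn1.
Qed.

End AddCell.

Section TwoCells.
Variables (lam mu nu : seq nat) (i1 i2 : nat).
Hypotheses (sorted_mu : sorted geq mu) (sorted_lam : sorted geq lam)
  (sorted_nu : sorted geq nu).
Hypothesis lam_row : forall j, nth 0 lam j = nth 0 mu j + (j == i1).
Hypothesis nu_row : forall j, nth 0 nu j = nth 0 lam j + (j == i2).

Lemma Aexp_add_Bexp :
  (Aexp nu lam mu + Bexp nu lam mu
   = (nth 0 mu i1 + i2)%N%:Z - (nth 0 lam i2 + i1)%N%:Z)%R.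
Proof.
rewrite /Aexp /Bexp (nfun'_add sorted_lam sorted_nu nu_row).
rewrite (nfun_add sorted_lam sorted_nu nu_row) (nfun'_add sorted_mu sorted_lam lam_row).
by rewrite (nfun_add sorted_mu sorted_lam lam_row); lia.
Qed.

Lemma c_mu_nu_rows : c_mu_nu lam mu nu =
  if (nth 0 mu i1).+1 <= nth 0 lam i2 then ((nth 0 mu i1).+1, i2.+1)
  else ((nth 0 lam i2).+1, i1.+1).
Proof.
rewrite /c_mu_nu /skew_cell (skew_add sorted_mu sorted_lam lam_row).
by rewrite (skew_add sorted_lam sorted_nu nu_row) /= mem_cells.
Qed.

Lemma hook_c_mu_nu_rows :
  hook lam (c_mu_nu lam mu nu) = `|(Aexp nu lam mu + Bexp nu lam mu)%R|%N.
Proof.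
have pcol_lam : pcol lam (nth 0 mu i1).+1 = i1.+1.
  rewrite (pcol_add sorted_mu sorted_lam lam_row) //.
  by rewrite (pcol_new sorted_mu sorted_lam lam_row) eqxx addn1.
have lam_i1 : nth 0 lam i1 = (nth 0 mu i1).+1 by rewrite lam_row eqxx addn1.
rewrite Aexp_add_Bexp c_mu_nu_rows /hook /arm /leg /prow; case: ifP => le_mu_lam /=.
- have := leq_pcol lam (nth 0 mu i1).+1 i2.+1 sorted_lam isT isT.
  by rewrite le_mu_lam pcol_lam /=; lia.
- have : pcol lam (nth 0 mu i1).+1 <= pcol lam (nth 0 lam i2).+1.
    by apply: sub_count => z /=; apply: leq_trans; rewrite ltnS leqNgt le_mu_lam.
  by rewrite pcol_lam (pcol_new sorted_lam sorted_nu nu_row) lam_i1; lia.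
Qed.

End TwoCells.

Lemma hook_c_mu_nu (lam mu nu : seq nat) : inD lam mu -> inU lam nu ->
  hook lam (c_mu_nu lam mu nu) = `|(Aexp nu lam mu + Bexp nu lam mu)%R|%N.
Proof.
move=> /lessdot_add_row[sorted_mu sorted_lam [i1 lam_row]].
move=> /lessdot_add_row[_ sorted_nu [i2 nu_row]].
exact: hook_c_mu_nu_rows sorted_mu sorted_lam sorted_nu lam_row nu_row.
Qed.

Local Open Scope classical_set_scope.
Local Open Scope ring_scope.

Lemma Hprod_neq0 (F : numDomainType) (l : seq nat) : (Hprod l)%:R != 0 :> F.
Proof. by rewrite pnatr_eq0 -lt0n prodn_gt0 // => c; rewrite /hook addn1. Qed.

Section QInteger.
Context {R : realType}.

Definition qint (q : R) (m : int) : R := (1 - q ^ m) / (1 - q).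

Lemma near1_neq1 : \forall q \near (1 : R)^', q != 1.
Proof. exact: nbhs_dnbhs_neq. Qed.

Lemma near1_gt0 : \forall q \near (1 : R)^', 0 < q.
Proof.
have q_to1 : (fun q : R => q) @ (1 : R)^' --> (1 : R) by exact: nbhs_dnbhs.
exact: cvgr_gt q_to1 _ ltr01.
Qed.

Lemma exprn_cvg1 (n : nat) : q ^+ n @[q --> (1 : R)^'] --> (1 : R).
Proof.
rewrite -[X in _ --> X](expr1n R n); apply: cvg_trans (@exprn_continuous R n 1).
exact: cvg_app _ (@nbhs_dnbhs R 1).
Qed.

Lemma exprz_cvg1 (m : int) : q ^ m @[q --> (1 : R)^'] --> (1 : R).
Proof.
case: m => n; first exact: exprn_cvg1.
by have := cvgV (oner_neq0 R) (exprn_cvg1 n.+1); rewrite invr1; apply.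
Qed.

Lemma qint_nat (q : R) (n : nat) : q != 1 -> qint q n = \sum_(i < n) q ^+ i.
Proof.
move=> q_neq1; have q1_neq0 : 1 - q != 0 by rewrite subr_eq0 eq_sym.
by rewrite /qint -opprB subrX1 -mulNr opprB mulrC mulKf.
Qed.

Lemma qintN (q : R) (m : int) : q != 0 -> qint q (- m) = - qint q m / q ^ m.
Proof.
move=> q_neq0; have qm_neq0 : q ^ m != 0 by rewrite expfz_neq0.
have qN : 1 - q ^ (- m) = - (1 - q ^ m) / q ^ m by rewrite -invr_expz; field.
by rewrite /qint qN !mulNr mulrAC.
Qed.

Lemma qint_nat_cvg (n : nat) : qint q n @[q --> (1 : R)^'] --> (n%:R : R).
Proof.
have -> : n%:R = \sum_(i < n) (1 : R) by rewrite sumr_const card_ord.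
apply: cvg_trans (cvg_big add_continuous _ (fun (i : 'I_n) _ => exprn_cvg1 i)).
apply: near_eq_cvg; near=> q; apply/esym/qint_nat.
by near: q; exact: near1_neq1.
Unshelve. all: by end_near. Qed.

Lemma qint_cvg (m : int) : qint q m @[q --> (1 : R)^'] --> (m%:~R : R).
Proof.
case: m => [n|n]; first exact: qint_nat_cvg.
rewrite NegzE -[X in _ --> X]divr1 mulrNz.
have lim_N : - qint q n.+1 / q ^ n.+1 @[q --> (1 : R)^'] --> (- n.+1%:R / 1 : R).
  exact: cvgM (cvgN (qint_nat_cvg n.+1)) (cvgV (oner_neq0 R) (exprz_cvg1 n.+1)).
apply: cvg_trans lim_N; apply: near_eq_cvg; near=> q; rewrite /= -qintN //.
by rewrite gt_eqF //; near: q; exact: near1_gt0.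
Unshelve. all: by end_near. Qed.

End QInteger.

Section Limits.
Variable R : realType.

Lemma br_diag (q : R) (a b : nat) : br q q a b = 1 - q ^+ (a + b).
Proof. by rewrite /br exprD. Qed.

Lemma br_ratio_cvg (a b c d : nat) : (0 < c + d)%N ->
  br q q a b / br q q c d @[q --> (1 : R)^'] --> ((a + b)%:R / (c + d)%:R : R).
Proof.
move=> cd_gt0; have cd_neq0 : (c + d)%:R != 0 :> R by rewrite pnatr_eq0 -lt0n.
apply: cvg_trans (cvgM (qint_nat_cvg _) (cvgV cd_neq0 (qint_nat_cvg _))).
apply: near_eq_cvg; near=> q; have : q != 1 by near: q; exact: near1_neq1.
rewrite -subr_eq0 -opprB oppr_eq0 => q1_neq0.
by rewrite /= /qint !br_diag invf_div mulrA divfK.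
Unshelve. all: by end_near. Qed.

Lemma gamma_diag (nu lam mu : seq nat) (q : R) : q != 0 ->
  gamma nu lam mu q q = qint q (Aexp nu lam mu + Bexp nu lam mu) ^+ 2.
Proof.
move=> q_neq0; have q_unit : q \is a GRing.unit by rewrite unitfE.
rewrite /gamma /qint -!expfzDr // [Aexp _ _ _ + 1 + _]addrACA subrr addr0.
by rewrite expr2 mulf_div.
Qed.

Lemma gamma_cvg (nu lam mu : seq nat) :
  gamma nu lam mu q q @[q --> (1 : R)^'] -->
    ((Aexp nu lam mu + Bexp nu lam mu)%:~R ^+ 2 : R).
Proof.
rewrite expr2; apply: cvg_trans (cvgM (qint_cvg _) (qint_cvg _)).
apply: near_eq_cvg; near=> q; rewrite /= gamma_diag ?expr2 //.
by rewrite gt_eqF //; near: q; exact: near1_gt0.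
Unshelve. all: by end_near. Qed.

Lemma alpha_cvg (k r : seq nat) : lessdot k r ->
  alpha r k q q @[q --> (1 : R)^'] --> ((Hprod k)%:R / (Hprod r)%:R : R).
Proof.
move=> /lessdot_add_row[sorted_k sorted_r [i r_row]].
rewrite -(prod_hook_ratio_add sorted_k sorted_r r_row).
apply: cvgM; apply: (cvg_big mul_continuous) => // c _.
  by rewrite !hook_arm_legS; apply: br_ratio_cvg; rewrite addnS.
by rewrite !hook_armS_leg; apply: br_ratio_cvg; rewrite addSn.
Qed.

Lemma alphabar_cvg (k r : seq nat) : lessdot k r ->
  alphabar r k q q @[q --> (1 : R)^'] --> ((Hprod k)%:R / (Hprod r)%:R : R).
Proof.
move=> /lessdot_add_row[sorted_k sorted_r [i r_row]].
rewrite -(prod_hook_ratio_add sorted_k sorted_r r_row).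
apply: cvgM; apply: (cvg_big mul_continuous) => // c _.
  by rewrite !hook_armS_leg; apply: br_ratio_cvg; rewrite addSn.
by rewrite !hook_arm_legS; apply: br_ratio_cvg; rewrite addnS.
Qed.

End Limits.

Lemma transition_cvg (R : realType) (B : int) (a b g : R -> R) (x y z w : R) :
  x != 0 -> y != 0 -> z != 0 -> w != 0 ->
  a q @[q --> (1 : R)^'] --> x / z -> b q @[q --> (1 : R)^'] --> y / x ->
  g q @[q --> (1 : R)^'] --> w ->
  q ^ B * a q * (b q)^-1 / g q @[q --> (1 : R)^'] --> x ^+ 2 / (y * z) * w^-1.
Proof.
move=> x_neq0 y_neq0 z_neq0 w_neq0 a_lim b_lim g_lim.
have yx_neq0 : y / x != 0 by rewrite mulf_neq0 ?invr_neq0.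
have -> : x ^+ 2 / (y * z) * w^-1 = 1 * (x / z) * (y / x)^-1 * w^-1.
  by field; apply/and4P.
apply: cvgM (cvgV w_neq0 g_lim).
exact: cvgM (cvgM (exprz_cvg1 B) a_lim) (cvgV yx_neq0 b_lim).
Qed.

Theorem lemma4p15 (R : realType) (lam mu nu : seq nat) :
  is_partition lam -> inD lam mu -> inU lam nu ->
  let h := (hook lam (c_mu_nu lam mu nu))%:R : R in
  let lim := ((Hprod lam)%:R ^+ 2 / ((Hprod mu)%:R * (Hprod nu)%:R))
               * (h ^+ 2)^-1 : R in
  [/\ gamma nu lam mu q q @[q --> (1 : R)^'] --> h ^+ 2,
      Pforw lam mu nu q q @[q --> (1 : R)^'] --> lim
    & Pback lam mu nu q q @[q --> (1 : R)^'] --> lim].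
Proof.
(* [is_partition lam] is already part of [inD lam mu]. *)
move=> _ mu_lam lam_nu h lim.
have h_sq : h ^+ 2 = (Aexp nu lam mu + Bexp nu lam mu)%:~R ^+ 2.
  rewrite /h hook_c_mu_nu // -natrX -abszX natr_absz ger0_norm ?sqr_ge0 //.
  by rewrite rmorphXn.
have gamma_lim : gamma nu lam mu q q @[q --> (1 : R)^'] --> h ^+ 2.
  by rewrite h_sq; exact: gamma_cvg.
have h2_neq0 : h ^+ 2 != 0 by rewrite expf_neq0 // pnatr_eq0 /hook addn1.
split => //; rewrite /Pforw /Pback /beta /betabar.
- by apply: transition_cvg gamma_lim; rewrite ?Hprod_neq0 //; exact: alpha_cvg.
- by apply: transition_cvg gamma_lim; rewrite ?Hprod_neq0 //; exact: alphabar_cvg.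
Qed.
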